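(* Let $\mathbf{L}$ be a Euclidean modal logic such that $\mathtt{S}_{\mathbf{L}}\setminus\big((\{1\}\times\mathbf{N}^{-})\cup(\mathbf{N}^{+}\times\{-1,0,1\})\big)$ is finite. Let $\varphi$ be a modal formula with $\mathbf{L}=\mathbf{K5}\oplus\varphi$. Let $k$ be the least integer such that $k\ge4$ and for all $m\in\mathbf{N}^{+}$, $n\in\mathbf{N}^{-}$, if $(m,n)\in\mathtt{S}_{\mathbf{L}}\setminus\big((\{1\}\times\mathbf{N}^{-})\cup(\mathbf{N}^{+}\times\{-1,0,1\})\big)$ then $m+n\le k$. Then for every first-order sentence $A$ and every individual variable $\mathbf{x}$ not occurring in $A$, the following are equivalent: (1) $A$ is modally definable in $\mathtt{Fr}(\mathbf{L})$; (2) $A\leftrightarrow\forall\mathbf{x}\,\tau(\mathbf{x},A)$ belongs to $\mathtt{Th}(\mathtt{Fr}(\mathbf{L}))$, and for all $m,m'\in\mathbf{N}^{+}$ and $n,n'\in\mathbf{N}^{-}$, if $\varphi$ is valid in $\mathcal{F}_m^n$, $(m,n)\in\Pi_k^A$, $m'\le m$, $n'\le n$ and $\mathcal{F}_m^n\models A$, then $\mathcal{F}_{m'}^{n'}\models A$.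
   Context: A frame is a pair $(W,R)$ with $W$ non-empty and $R\subseteq W\times W$; Euclidean means $sRt$ and $sRu$ imply $tRu$ and $uRt$. Modal formulas (propositional variables, $\bot,\neg,\vee,\Box$) have standard Kripke semantics; validity in a frame means truth at all points under all valuations. A (normal) modal logic contains all tautologies and K axioms and is closed under uniform substitution, modus ponens and necessitation; a Euclidean modal logic is one not containing $\bot$ and containing $\Diamond\psi\to\Box\Diamond\psi$ for all $\psi$; $\mathbf{K5}$ is the least modal logic containing all $\Diamond\psi\to\Box\Diamond\psi$ and $\mathbf{K5}\oplus\varphi$ the least modal logic containing $\mathbf{K5}$ and $\varphi$. $\mathtt{Fr}(\mathbf{L})$ is the class of frames validating $\mathbf{L}$; $\mathtt{Th}(\mathcal{C})$ is the set of first-order sentences valid in all frames of $\mathcal{C}$. First-order formulas are built from atoms $\mathbf{R}(\mathbf{y},\mathbf{z})$, $\mathbf{y}=\mathbf{z}$ with $\neg,\vee,\forall$ (other connectives and $\exists$ are abbreviations). A sentence $A$ is modally definable in a class $\mathcal{C}$ if there is a modal formula $\psi$ with $\mathcal{F}\models\psi\iff\mathcal{F}\models A$ for all $\mathcal{F}\in\mathcal{C}$. The rooted translation $\tau(\mathbf{x},\cdot)$ (for $\mathbf{x}$ not occurring in the formula) is defined by: $\tau(\mathbf{x},\mathbf{R}(\mathbf{y},\mathbf{z}))=\mathbf{R}(\mathbf{y},\mathbf{z})$; $\tau(\mathbf{x},\mathbf{y}=\mathbf{z})=(\mathbf{y}=\mathbf{z})$; $\tau(\mathbf{x},\neg B)=\neg\tau(\mathbf{x},B)$;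 $\tau(\mathbf{x},B\vee C)=\tau(\mathbf{x},B)\vee\tau(\mathbf{x},C)$; $\tau(\mathbf{x},\forall\mathbf{y}B)=\forall\mathbf{y}\big((\mathbf{x}=\mathbf{y}\vee\exists\mathbf{z}(\mathbf{R}(\mathbf{x},\mathbf{z})\wedge\mathbf{R}(\mathbf{z},\mathbf{y})))\to\tau(\mathbf{x},B)\big)$. Let $\mathtt{qdd}(A)=\max\{\mathtt{qd}(A),3\}$ with $\mathtt{qd}$ the quantifier depth. For $k\ge4$, $\Pi_k^A$ is the set of $(m,n)\in\mathbf{N}^{+}\times\mathbf{N}^{-}$ such that: if $m\ge2$ and $n\ge2$ then $m+n\le k$; if $m=1$ then $n\le\mathtt{qdd}(A)$; and if $n\in\{-1,0,1\}$ then $m\le\mathtt{qdd}(A)$. $\mathbf{N}^{+}=\{1,2,\dots\}$, $\mathbf{N}^{-}=\{-1,0,1,\dots\}$. For $m\in\mathbf{N}^{+}$, $n\ge0$, the flower $\mathcal{F}_m^n$ has universe $\{0,\dots,m+n\}$ and relation $(\{0\}\times\{1,\dots,m\})\cup\{1,\dots,m+n\}^2$; $\mathcal{F}_m^{-1}$ has universe $\{1,\dots,m\}$ and relation $\{1,\dots,m\}^2$. $\mathtt{S}_{\mathbf{L}}=\{(m,n)\in\mathbf{N}^{+}\times\mathbf{N}^{-}:\ \mathbf{L}\text{ valid in }\mathcal{F}_m^n\}$. *)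

From Stdlib Require Import ZArith List Arith Lia.
Open Scope Z_scope.

Record frame := mkFrame { world : Type; rel : world -> world -> Prop }.

Inductive mform : Type :=
| MVar : nat -> mform
| MBot : mform
| MNeg : mform -> mform
| MOr : mform -> mform -> mform
| MBox : mform -> mform.

Definition MImp (a b : mform) : mform := MOr (MNeg a) b.
Definition MDia (a : mform) : mform := MNeg (MBox (MNeg a)).

Fixpoint msat (F : frame) (V : nat -> world F -> Prop) (w : world F) (f : mform)
  : Prop :=
  match f with
  | MVar p => V p w
  | MBot => False
  | MNeg g => ~ msat F V w g
  | MOr g h => msat F V w g \/ msat F V w h
  | MBox g => forall v, rel F w v -> msat F V v g
  end.

Definition mvalid (F : frame) (f : mform) : Prop :=
  forall (V : nat -> world F -> Prop) (w : world F), msat F V w f.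

(* propositional evaluation treating variables and boxed formulas as atoms;
   tautologies = substitution instances of classical tautologies *)
Fixpoint peval (v : mform -> bool) (f : mform) : bool :=
  match f with
  | MVar p => v (MVar p)
  | MBot => false
  | MNeg g => negb (peval v g)
  | MOr g h => peval v g || peval v h
  | MBox g => v (MBox g)
  end.

Definition tautology (f : mform) : Prop := forall v, peval v f = true.

Fixpoint msubst (s : nat -> mform) (f : mform) : mform :=
  match f with
  | MVar p => s p
  | MBot => MBot
  | MNeg g => MNeg (msubst s g)
  | MOr g h => MOr (msubst s g) (msubst s h)
  | MBox g => MBox (msubst s g)
  end.

Definition Kax (a b : mform) : mform :=
  MImp (MBox (MImp a b)) (MImp (MBox a) (MBox b)).

Definition modal_logic (L : mform -> Prop) : Prop :=
  (forall f, tautology f -> L f) /\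
  (forall a b, L (Kax a b)) /\
  (forall s f, L f -> L (msubst s f)) /\
  (forall a b, L (MImp a b) -> L a -> L b) /\
  (forall a, L a -> L (MBox a)).

Definition ax5 (psi : mform) : mform := MImp (MDia psi) (MBox (MDia psi)).

Definition euclidean_logic (L : mform -> Prop) : Prop :=
  modal_logic L /\ ~ L MBot /\ (forall psi, L (ax5 psi)).

Definition K5plus (phi : mform) (f : mform) : Prop :=
  forall L : mform -> Prop, modal_logic L -> (forall psi, L (ax5 psi)) -> L phi -> L f.

Definition FrL (L : mform -> Prop) (F : frame) : Prop :=
  inhabited (world F) /\ forall f, L f -> mvalid F f.

Definition flower_pos (m n : nat) : frame :=
  {| world := { i : nat | (i <= m + n)%nat };
     rel := fun a b =>
       (proj1_sig a = 0%nat /\ (1 <= proj1_sig b <= m)%nat) \/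
       ((1 <= proj1_sig a <= m + n)%nat /\ (1 <= proj1_sig b <= m + n)%nat) |}.

Definition cluster (m : nat) : frame :=
  {| world := { i : nat | (1 <= i <= m)%nat }; rel := fun _ _ => True |}.

(* used only for n >= -1 *)
Definition flower (m : nat) (n : Z) : frame :=
  if n <? 0 then cluster m else flower_pos m (Z.to_nat n).

(* S_L, with m in N^+ and n in N^- = {-1,0,1,...} *)
Definition S_L (L : mform -> Prop) (m : nat) (n : Z) : Prop :=
  (1 <= m)%nat /\ -1 <= n /\ forall f, L f -> mvalid (flower m n) f.

Definition S_L_core (L : mform -> Prop) (m : nat) (n : Z) : Prop :=
  S_L L m n /\ m <> 1%nat /\ ~ (-1 <= n <= 1).

Inductive fo : Type :=
| FR : nat -> nat -> fo
| FEq : nat -> nat -> fo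
| FNeg : fo -> fo
| FOr : fo -> fo -> fo
| FAll : nat -> fo -> fo.

Definition FAnd (a b : fo) : fo := FNeg (FOr (FNeg a) (FNeg b)).
Definition FImp (a b : fo) : fo := FOr (FNeg a) b.
Definition FIff (a b : fo) : fo := FAnd (FImp a b) (FImp b a).
Definition FEx (y : nat) (a : fo) : fo := FNeg (FAll y (FNeg a)).

Definition upd {D : Type} (g : nat -> D) (y : nat) (d : D) : nat -> D :=
  fun v => if Nat.eqb v y then d else g v.

Fixpoint fsat (F : frame) (g : nat -> world F) (A : fo) : Prop :=
  match A with
  | FR y z => rel F (g y) (g z)
  | FEq y z => g y = g z
  | FNeg B => ~ fsat F g B
  | FOr B C => fsat F g B \/ fsat F g C
  | FAll y B => forall d : world F, fsat F (upd g y d) B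
  end.

Definition fmodels (F : frame) (A : fo) : Prop := forall g, fsat F g A.

Fixpoint free_in (x : nat) (A : fo) : Prop :=
  match A with
  | FR y z => x = y \/ x = z
  | FEq y z => x = y \/ x = z
  | FNeg B => free_in x B
  | FOr B C => free_in x B \/ free_in x C
  | FAll y B => x <> y /\ free_in x B
  end.

Definition sentence (A : fo) : Prop := forall x, ~ free_in x A.

Fixpoint occurs (x : nat) (A : fo) : Prop :=
  match A with
  | FR y z => x = y \/ x = z
  | FEq y z => x = y \/ x = z
  | FNeg B => occurs x B
  | FOr B C => occurs x B \/ occurs x C
  | FAll y B => x = y \/ occurs x B
  end.

Fixpoint qd (A : fo) : nat :=
  match A with
  | FR _ _ | FEq _ _ => 0%nat
  | FNeg B => qd B
  | FOr B C => Nat.max (qd B) (qd C)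
  | FAll _ B => S (qd B)
  end.

Definition qdd (A : fo) : nat := Nat.max (qd A) 3.

Definition freshz (x y : nat) : nat := S (Nat.max x y).

Fixpoint tau (x : nat) (A : fo) : fo :=
  match A with
  | FR y z => FR y z
  | FEq y z => FEq y z
  | FNeg B => FNeg (tau x B)
  | FOr B C => FOr (tau x B) (tau x C)
  | FAll y B =>
      let z := freshz x y in
      FAll y (FImp (FOr (FEq x y) (FEx z (FAnd (FR x z) (FR z y)))) (tau x B))
  end.

Definition in_Th (C : frame -> Prop) (A : fo) : Prop :=
  forall F, C F -> fmodels F A.

Definition modally_definable (C : frame -> Prop) (A : fo) : Prop :=
  exists psi : mform, forall F, C F -> (mvalid F psi <-> fmodels F A).

Definition Pi (k : nat) (A : fo) (m : nat) (n : Z) : Prop :=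
  (1 <= m)%nat /\ -1 <= n /\
  (((2 <= m)%nat /\ 2 <= n) -> Z.of_nat m + n <= Z.of_nat k) /\
  (m = 1%nat -> n <= Z.of_nat (qdd A)) /\
  (-1 <= n <= 1 -> (m <= qdd A)%nat).

Definition k_bound (L : mform -> Prop) (k : nat) : Prop :=
  (4 <= k)%nat /\
  forall m n, (1 <= m)%nat -> -1 <= n -> S_L_core L m n -> Z.of_nat m + n <= Z.of_nat k.

From Stdlib Require Import ZArith List Lia Classical ClassicalEpsilon ProofIrrelevance.
Import ListNotations.
Local Open Scope nat_scope.

(* Frames of [L = K5 (+) phi] are the Euclidean frames validating [phi], and in a
   Euclidean frame the subframe generated by [w] consists of [w], its successors and the
   rest of the final cluster. Its points thus come in three types (irreflexive root,
   successor, point unseen from the root) which determine the relation. An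
   Ehrenfeucht-Fraisse argument shows that a sentence of quantifier depth [q] does not
   distinguish two such frames whose type counts agree up to [q]: every generated
   subframe behaves, for [A], like a flower [F_c^n] with [c, n <= qdd A] (or like a
   single irreflexive point), of which it is moreover a p-morphic preimage.

   (1) -> (2): definable classes are closed under generated subframes and p-morphic
   images, and [F_m'^n'] is a p-morphic image of [F_m^n].
   (2) -> (1): the bound [k] on the large flowers of [Fr(L)], together with the
   stabilisation of first-order theories of flowers beyond [qdd A] points, extends the
   downward closure from [Pi_k^A] to all flowers. So [A] holds in the subframe generated
   by [w] iff no small flower of [Fr(L)] refuting [A] fits below [w], which is expressed
   by negations of modal formulas describing flowers; the condition on [tau] reduces
   the validity of [A] in a frame to its generated subframes. *)

Definition at_least {X : Type} (P : X -> Prop) (i : nat) : Prop :=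
  exists l : list X, NoDup l /\ length l = i /\ forall x, In x l -> P x.

Lemma at_least_0 {X} (P : X -> Prop) : at_least P 0.
Proof. exists []; repeat split; [constructor | contradiction]. Qed.

Lemma at_least_1 {X} (P : X -> Prop) : at_least P 1 <-> exists x, P x.
Proof.
  split.
  - intros [[|x] [_ [? HP]]]; [discriminate | exists x; apply HP; left; auto].
  - intros [x Hx]. exists [x]; split; [repeat constructor; auto|].
    split; [reflexivity | intros ? [<-|[]]; auto].
Qed.

Lemma at_least_le {X} (P : X -> Prop) i j : at_least P i -> j <= i -> at_least P j.
Proof.
  intros Hi Hji; induction Hji as [|i Hji IH]; auto.
  apply IH. destruct Hi as [[|a l] [Hnd [Hl HP]]]; [discriminate|].
  inversion Hnd; subst. exists l; simpl in *; auto.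
Qed.

Lemma at_least_impl {X} (P P' : X -> Prop) i :
  (forall x, P x -> P' x) -> at_least P i -> at_least P' i.
Proof. intros H [l [Hnd [Hl HP]]]. exists l; auto. Qed.

Lemma at_least_iff {X} (P P' : X -> Prop) i :
  (forall x, P x <-> P' x) -> (at_least P i <-> at_least P' i).
Proof. intros H; split; apply at_least_impl; firstorder. Qed.

Lemma at_least_empty {X} (P : X -> Prop) i : (forall x, ~ P x) -> (at_least P i <-> i = 0).
Proof.
  intros H; split; [|intros ->; apply at_least_0].
  intros [[|a l] [_ [Hl HP]]]; [auto|]. destruct (H a); apply HP; left; auto.
Qed.

Lemma at_least_singleton {X} (P : X -> Prop) a i :
  P a -> (forall x, P x -> x = a) -> (at_least P i <-> i <= 1).
Proof.
  intros Ha H; split.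
  - intros [[|x [|y l]] [Hnd [<- HP]]]; simpl; try lia.
    inversion Hnd as [|? ? Hx]; subst. destruct Hx; left.
    rewrite (H y), (H x); auto; apply HP; simpl; auto.
  - intros Hi. apply (at_least_le _ 1); [apply at_least_1; eauto | auto].
Qed.

Lemma at_least_truncate {X} (P : X -> Prop) (Q : nat) :
  exists c, c <= Q /\ forall i, i <= Q -> (at_least P i <-> i <= c).
Proof.
  induction Q as [|Q [c [HcQ Hc]]].
  - exists 0; split; auto. intros i Hi; replace i with 0 by lia.
    split; auto using at_least_0.
  - destruct (classic (c = Q /\ at_least P (S Q))) as [[-> HS]|Hn].
    + exists (S Q); split; auto. intros i Hi; split; auto.
      intros; eapply at_least_le; eauto.
    + exists c; split; [lia|]. intros i Hi.
      destruct (Nat.eq_dec i (S Q)) as [->|]; [|apply Hc; lia].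
      split; [|lia]. intros HS. destruct Hn; split; auto.
      enough (~ c < Q) by lia. intros Hlt.
      enough (S c <= c) by lia. apply Hc; [lia|]. eapply at_least_le; eauto.
Qed.

Lemma at_least_maximal {X} (P : X -> Prop) (l : list X) :
  NoDup l -> (forall x, In x l -> P x) -> ~ at_least P (S (length l)) ->
  forall x, P x -> In x l.
Proof.
  intros Hnd Hl Hmax x Hx. apply NNPP; intro Hxl. apply Hmax.
  exists (x :: l); repeat split; [constructor; auto | intros y [<-|]; auto].
Qed.

Lemma sig_inj {X} (D : X -> Prop) (u v : {x | D x}) : proj1_sig u = proj1_sig v -> u = v.
Proof. destruct u, v; simpl; intros ->; apply subset_eq_compat; reflexivity. Qed.

Lemma at_least_sig {X} (D P : X -> Prop) i : (forall x, P x -> D x) ->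
  (at_least (fun u : {x | D x} => P (proj1_sig u)) i <-> at_least P i).
Proof.
  intros HPD; split.
  - intros [l [Hnd [<- HP]]]. exists (map (@proj1_sig _ _) l). repeat split.
    + apply NoDup_map_NoDup_ForallPairs; auto.
      intros u v _ _; apply sig_inj.
    + apply length_map.
    + intros x Hx. apply in_map_iff in Hx. destruct Hx as [u [<- Hu]]. auto.
  - intros [l [Hnd [<- HP]]].
    assert (Hlift : exists l' : list {x | D x}, map (@proj1_sig _ _) l' = l).
    { clear Hnd. induction l as [|a l IH]; [exists []; auto|].
      destruct IH as [l' Hl']; [intros; apply HP; right; auto|].
      exists (exist _ a (HPD a (HP a (or_introl eq_refl))) :: l'); simpl; congruence. }
    destruct Hlift as [l' <-]. exists l'. repeat split.
    + eapply NoDup_map_inv; eauto.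
    + symmetry; apply length_map.
    + intros u Hu. apply HP, in_map, Hu.
Qed.

Lemma at_least_interval (D : nat -> Prop) (P : {i | D i} -> Prop) st N i :
  (forall a, P a <-> st <= proj1_sig a < st + N) -> (forall k, st <= k < st + N -> D k) ->
  (at_least P i <-> i <= N).
Proof.
  intros HP HD.
  rewrite (at_least_iff _ (fun a => st <= proj1_sig a < st + N)) by auto.
  rewrite (at_least_sig D (fun k => st <= k < st + N)) by auto. split.
  - intros [l [Hnd [<- Hl]]].
    rewrite <- (length_seq N st). apply NoDup_incl_length; auto.
    intros k Hk; apply in_seq, Hl, Hk.
  - intros Hi. apply (at_least_le _ N); auto.
    exists (seq st N); split; [apply seq_NoDup | split; [apply length_seq |]].
    intros k Hk; apply in_seq, Hk.
Qed.

Lemma dedup_by {X Y} (f : X -> Y) (P : X -> Prop) (l : list X) :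
  exists U, (forall u, In u U -> In u l /\ P u) /\ NoDup (map f U) /\
    forall x, In x l -> P x -> exists u, In u U /\ f u = f x.
Proof.
  induction l as [|a l [U [HUl [HUnd HUcov]]]].
  - exists []; split; [intros ? [] | split; [constructor | intros ? []]].
  - destruct (classic (P a /\ ~ In (f a) (map f U))) as [[Ha Hfa]|Hskip].
    + exists (a :: U); split; [|split].
      * intros u [<-|Hu]; [simpl; auto | split; [right|]; apply HUl, Hu].
      * constructor; auto.
      * intros x [<-|Hx] Hpx; [exists a; simpl; auto|].
        destruct (HUcov x Hx Hpx) as [u [? ?]]; exists u; simpl; auto.
    + exists U; split; [|split]; auto.
      * intros u Hu; split; [right|]; apply HUl, Hu.
      * intros x [<-|Hx] Hpx; [|destruct (HUcov x Hx Hpx) as [u [? ?]]; eauto].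
        assert (Hin : In (f a) (map f U)) by (apply NNPP; tauto).
        apply in_map_iff in Hin. destruct Hin as [u [? ?]]; eauto.
Qed.

Lemma Forall2_injection {X Y} (R : X -> Y -> Prop) (y0 : Y) (l1 : list X) (l2 : list Y) :
  NoDup l2 -> Forall2 R l1 l2 ->
  exists g : X -> Y, forall x, In x l1 -> In (g x) l2 /\ R x (g x) /\
    forall x', In x' l1 -> g x = g x' -> x = x'.
Proof.
  intros Hnd H2; induction H2 as [|a b l1 l2 Hab H2 IH].
  - exists (fun _ => y0); contradiction.
  - inversion Hnd as [|? ? Hb Hnd']; subst. destruct (IH Hnd') as [g Hg].
    exists (fun x => if excluded_middle_informative (x = a) then b else g x).
    intros x Hx.
    destruct (excluded_middle_informative (x = a)) as [->|Hxa].
    + repeat split; [left; auto | auto |]. intros x' Hx' Hgx'.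
      destruct (excluded_middle_informative (x' = a)) as [|Hx'a]; auto.
      destruct Hx' as [|Hx']; [congruence|]. destruct Hb; rewrite Hgx'; apply Hg, Hx'.
    + destruct Hx as [|Hx]; [congruence|]. destruct (Hg x Hx) as [Hgx [HR Hinj]].
      repeat split; [right; auto | auto |]. intros x' Hx' Hgx'.
      destruct (excluded_middle_informative (x' = a)) as [->|Hx'a].
      * destruct Hb; rewrite <- Hgx'; auto.
      * destruct Hx' as [|Hx']; [congruence|]. auto.
Qed.

Lemma NoDup_map_transfer {X Y Z} (f : X -> Y) (f' : X -> Z) (l : list X) :
  NoDup (map f l) -> (forall x y, In x l -> In y l -> f' x = f' y -> f x = f y) ->
  NoDup (map f' l).
Proof.
  induction l as [|a l IH]; simpl; intros Hnd H; inversion Hnd as [|? ? Ha Hnd']; subst;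
    constructor.
  - intros Hin. apply in_map_iff in Hin as [b [Hb Hbl]].
    apply Ha. rewrite (H a b); auto. apply in_map, Hbl.
  - apply IH; auto.
Qed.

Lemma Forall2_all {X Y} (R : X -> Y -> Prop) (l1 : list X) (l2 : list Y) :
  length l1 = length l2 -> (forall x y, In x l1 -> In y l2 -> R x y) -> Forall2 R l1 l2.
Proof.
  revert l2; induction l1 as [|a l1 IH]; intros [|b l2] Hlen HR; try discriminate; constructor.
  - apply HR; left; auto.
  - apply IH; [injection Hlen; auto | intros; apply HR; right; auto].
Qed.

(** * Frames of [K5 (+) phi] *)

Definition euclid (F : frame) : Prop :=
  forall s t u, rel F s t -> rel F s u -> rel F t u.

Definition bval (P : Prop) : bool := if excluded_middle_informative P then true else false.

Lemma bval_true P : bval P = true <-> P.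
Proof. unfold bval; destruct excluded_middle_informative; split; auto; discriminate. Qed.

Lemma peval_msat F V w f : peval (fun g => bval (msat F V w g)) f = true <-> msat F V w f.
Proof.
  induction f; simpl.
  - apply bval_true.
  - split; [discriminate | contradiction].
  - rewrite Bool.negb_true_iff, <- IHf. destruct (peval _ f); split; congruence.
  - rewrite Bool.orb_true_iff, IHf1, IHf2; tauto.
  - apply bval_true.
Qed.

Lemma msat_subst F V s f w :
  msat F V w (msubst s f) <-> msat F (fun p u => msat F V u (s p)) w f.
Proof.
  revert w; induction f; intros w; simpl; try tauto.
  - rewrite IHf; tauto.
  - rewrite IHf1, IHf2; tauto.
  - split; intros H v Hv; apply IHf; auto.
Qed.

Lemma mvalid_modal_logic F : modal_logic (mvalid F).
Proof.
  repeat split.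
  - intros f Ht V w. apply peval_msat, Ht.
  - intros a b V w; simpl.
    destruct (classic (forall v, rel F w v -> msat F V v b)) as [|Hb]; [tauto|].
    apply not_all_ex_not in Hb. destruct Hb as [v Hv].
    apply imply_to_and in Hv. destruct Hv as [Hr Hnb].
    destruct (classic (msat F V v a)); [left | right; left]; intros Hbox; firstorder.
  - intros s f Hf V w. apply msat_subst, Hf.
  - intros a b Hab Ha V w. destruct (Hab V w) as [H|H]; simpl in H; [destruct H; apply Ha | auto].
  - intros a Ha V w v _. apply Ha.
Qed.

Lemma euclid_ax5 F psi : euclid F -> mvalid F (ax5 psi).
Proof.
  intros HE V w; simpl.
  destruct (classic (forall v, rel F w v -> ~ msat F V v psi)) as [H|H]; [left; tauto|].
  right. intros v Hv Hc. apply H. intros u Hu. apply (Hc u (HE _ _ _ Hv Hu)).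
Qed.

(* The instance [<>p -> []<>p] with [p] true exactly at [u]. *)
Lemma ax5_euclid F : (forall psi, mvalid F (ax5 psi)) -> euclid F.
Proof.
  intros H5 s t u Hst Hsu.
  destruct (H5 (MVar 0) (fun _ v => v = u) s) as [H|H]; simpl in H.
  - destruct H. intros H; apply (H u Hsu); reflexivity.
  - apply NNPP; intro Hn. apply (H t Hst). intros v Hv ->. auto.
Qed.

Lemma FrL_K5plus L phi F : (forall f, L f <-> K5plus phi f) ->
  FrL L F <-> inhabited (world F) /\ euclid F /\ mvalid F phi.
Proof.
  intros HL; split.
  - intros [Hi HF]. split; [auto | split].
    + apply ax5_euclid. intros psi; apply HF, HL. intros L' _ H5 _; apply H5.
    + apply HF, HL. intros L' _ _ Hphi; exact Hphi.
  - intros [Hi [HE Hphi]]. split; auto. intros f Hf.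
    apply HL in Hf. apply Hf; auto using mvalid_modal_logic. intros psi; apply euclid_ax5, HE.
Qed.

Definition pmorphism (M N : frame) (f : world M -> world N) : Prop :=
  (forall a b, rel M a b -> rel N (f a) (f b)) /\
  (forall a e, rel N (f a) e -> exists b, rel M a b /\ f b = e).

Lemma pmorphism_msat M N f V psi a : pmorphism M N f ->
  msat M (fun p u => V p (f u)) a psi <-> msat N V (f a) psi.
Proof.
  intros [Hforth Hback]; revert a; induction psi; intros a; simpl; try tauto.
  - rewrite IHpsi; tauto.
  - rewrite IHpsi1, IHpsi2; tauto.
  - split.
    + intros H e He. destruct (Hback a e He) as [b [Hb <-]]. apply IHpsi, H, Hb.
    + intros H b Hb. apply IHpsi, H, Hforth, Hb.
Qed.

Lemma pmorphism_valid M N f psi : pmorphism M N f -> (forall e, exists a, f a = e) ->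
  mvalid M psi -> mvalid N psi.
Proof.
  intros Hf Hsurj H V e. destruct (Hsurj e) as [a <-].
  apply (pmorphism_msat M N f V psi a Hf), H.
Qed.

Definition two_step (F : frame) (w v : world F) : Prop := exists z, rel F w z /\ rel F z v.

Definition unseen (F : frame) (w v : world F) : Prop := two_step F w v /\ ~ rel F w v.

(* In a Euclidean frame the subframe generated by [w] consists of [w] and the
   points two steps away from it; this matches the guard of [tau]. *)
Definition in_generated (F : frame) (w v : world F) : Prop := w = v \/ two_step F w v.

Definition generated (F : frame) (w : world F) : frame :=
  {| world := { v | in_generated F w v };
     rel := fun a b => rel F (proj1_sig a) (proj1_sig b) |}.

Definition generated_root (F : frame) (w : world F) : world (generated F w) :=
  exist _ w (or_introl eq_refl).

Section Euclidean.
Variables (F : frame) (HE : euclid F).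

Lemma rel_two_step w v : rel F w v -> two_step F w v.
Proof. intros H; exists v; split; eauto. Qed.

Lemma rel_refl_target a w : rel F a w -> rel F w w.
Proof. intros H; eapply HE; eauto. Qed.

Lemma two_step_rel w a b : two_step F w a -> two_step F w b -> rel F a b.
Proof.
  intros [z [Hz Hza]] [z' [Hz' Hz'b]].
  assert (rel F z z') by eauto. assert (rel F z b) by (eapply HE; [|eauto]; eauto).
  eauto.
Qed.

Lemma refl_in_generated w a : rel F w w -> in_generated F w a -> rel F w a.
Proof. intros Hw [<-|[z [Hz Hza]]]; auto. eapply HE; [|eauto]; eauto. Qed.

Lemma in_generated_closed w u v : in_generated F w u -> rel F u v -> in_generated F w v.
Proof.
  intros [<-|[z [Hz Hzu]]] Huv; right.
  - exists v; split; eauto.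
  - exists z; split; auto.
    assert (rel F z z) by eauto. assert (rel F u z) by eauto. eauto.
Qed.

End Euclidean.

Lemma generated_msat F w V (V' : nat -> world (generated F w) -> Prop) psi u :
  euclid F -> (forall p u, V' p u <-> V p (proj1_sig u)) ->
  msat (generated F w) V' u psi <-> msat F V (proj1_sig u) psi.
Proof.
  intros HE HV; revert u; induction psi; intros u; simpl; try tauto.
  - apply HV.
  - rewrite IHpsi; tauto.
  - rewrite IHpsi1, IHpsi2; tauto.
  - split; intros H v Hv.
    + apply (IHpsi (exist _ v (in_generated_closed F HE w _ _ (proj2_sig u) Hv))), H, Hv.
    + apply IHpsi, H, Hv.
Qed.

Lemma generated_valid F w psi : euclid F -> mvalid F psi -> mvalid (generated F w) psi.
Proof.
  intros HE H V' u.
  apply (generated_msat F w (fun p x => exists Hx, V' p (exist _ x Hx))); auto.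
  intros p [x Hx]; simpl; split; [eauto|].
  intros [Hx' H']. replace Hx with Hx' by apply proof_irrelevance. auto.
Qed.

Lemma valid_generated F psi : euclid F ->
  (forall w, mvalid (generated F w) psi) -> mvalid F psi.
Proof.
  intros HE H V u.
  apply (generated_msat F u V (fun p x => V p (proj1_sig x)) psi (generated_root F u)); [auto | tauto |].
  apply H.
Qed.

Lemma generated_euclid F w : euclid F -> euclid (generated F w).
Proof. intros HE a b c; apply HE. Qed.

Lemma FrL_generated L phi F w : (forall f, L f <-> K5plus phi f) ->
  FrL L F -> FrL L (generated F w).
Proof.
  intros HL HF. apply (FrL_K5plus L phi F HL) in HF as [_ [HE Hphi]].
  apply (FrL_K5plus L phi); auto.
  split; [constructor; exact (generated_root F w) | split].
  - apply generated_euclid, HE.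
  - apply generated_valid; auto.
Qed.

(** * The rooted translation *)

Lemma upd_eq {D} (g : nat -> D) y d : upd g y d y = d.
Proof. unfold upd; rewrite Nat.eqb_refl; auto. Qed.

Lemma upd_neq {D} (g : nat -> D) y d v : v <> y -> upd g y d v = g v.
Proof. intros H; unfold upd; apply Nat.eqb_neq in H; rewrite H; auto. Qed.

Lemma fsat_free F B g h : (forall v, free_in v B -> g v = h v) -> (fsat F g B <-> fsat F h B).
Proof.
  revert g h; induction B as [y z|y z|B IH|B1 IH1 B2 IH2|y B IH]; intros g h H; simpl in *.
  - rewrite (H y), (H z); auto; tauto.
  - rewrite (H y), (H z); auto; tauto.
  - rewrite (IH g h); auto; tauto.
  - rewrite (IH1 g h), (IH2 g h); auto; tauto.
  - split; intros H1 d; [apply (IH (upd g y d)) | apply (IH _ (upd h y d))]; auto;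
      intros v Hv; (destruct (Nat.eq_dec v y) as [->|]; [rewrite !upd_eq | rewrite !upd_neq]); auto.
Qed.

Lemma fsat_sentence F A g : sentence A -> (fsat F g A <-> fmodels F A).
Proof.
  intros HA; split; [|intros H; apply H].
  intros H h. apply (fsat_free F A g h); auto. intros v Hv; destruct (HA v Hv).
Qed.

Lemma fsat_iff F g a b : fsat F g (FIff a b) <-> (fsat F g a <-> fsat F g b).
Proof.
  unfold FIff, FAnd, FImp; simpl.
  destruct (classic (fsat F g a)); destruct (classic (fsat F g b)); tauto.
Qed.

Definition tau_guard (x y : nat) : fo :=
  FOr (FEq x y) (FEx (freshz x y) (FAnd (FR x (freshz x y)) (FR (freshz x y) y))).

Lemma fsat_guard F h x y d : x <> y ->
  fsat F (upd h y d) (tau_guard x y) <-> in_generated F (h x) d.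
Proof.
  intros Hxy. unfold tau_guard, in_generated, two_step, FEx, FAnd; simpl.
  set (z := freshz x y).
  assert (Hzx : x <> z) by (unfold z, freshz; lia).
  assert (Hzy : y <> z) by (unfold z, freshz; lia).
  rewrite upd_eq, (upd_neq _ _ _ _ Hxy).
  assert (E : forall c, upd (upd h y d) z c x = h x /\ upd (upd h y d) z c z = c /\
                        upd (upd h y d) z c y = d).
  { intros c. rewrite upd_eq, (upd_neq _ z _ x), (upd_neq _ z _ y), (upd_neq _ y _ x), upd_eq; auto. }
  split.
  - intros [H|H]; [left; auto | right]. apply NNPP; intro Hn; apply H; intros c Hc.
    destruct (E c) as [-> [-> ->]] in Hc. apply Hn. exists c. split; apply NNPP; tauto.
  - intros [H|[c [H1 H2]]]; [left; auto | right]. intro H. apply (H c).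
    destruct (E c) as [-> [-> ->]]. tauto.
Qed.

Lemma fsat_tau F w x B (h : nat -> world F) (h' : nat -> world (generated F w)) :
  ~ occurs x B -> h x = w -> (forall v, free_in v B -> h v = proj1_sig (h' v)) ->
  fsat F h (tau x B) <-> fsat (generated F w) h' B.
Proof.
  revert h h'; induction B as [y z|y z|B IH|B1 IH1 B2 IH2|y B IH];
    intros h h' Hoc Hx Hh; cbn [occurs free_in] in *.
  - simpl. rewrite (Hh y), (Hh z); auto; tauto.
  - simpl. rewrite (Hh y), (Hh z); auto. split; [apply sig_inj | intros ->; auto].
  - simpl. rewrite (IH h h'); auto; tauto.
  - simpl. rewrite (IH1 h h'), (IH2 h h'); auto; tauto.
  - change ((forall d, ~ fsat F (upd h y d) (tau_guard x y) \/ fsat F (upd h y d) (tau x B)) <->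
            (forall d', fsat (generated F w) (upd h' y d') B)).
    assert (Hxy : x <> y) by tauto.
    assert (Hupd : forall d d', d = proj1_sig d' ->
              fsat F (upd h y d) (tau x B) <-> fsat (generated F w) (upd h' y d') B).
    { intros d d' ->. apply IH; [tauto | rewrite upd_neq; auto |].
      intros v Hv. destruct (Nat.eq_dec v y) as [->|]; [rewrite !upd_eq | rewrite !upd_neq]; auto. }
    split.
    + intros H d'. destruct (H (proj1_sig d')) as [Hg|HB].
      * destruct Hg. apply fsat_guard; auto. rewrite Hx. apply (proj2_sig d').
      * apply (Hupd _ _ eq_refl), HB.
    + intros H d. destruct (classic (in_generated F w d)) as [Hd|Hd].
      * right. apply (Hupd d (exist _ d Hd) eq_refl), H.
      * left. rewrite fsat_guard, Hx; auto.
Qed.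

Lemma fsat_all_tau F x A g : euclid F -> sentence A -> ~ occurs x A ->
  fsat F g (FAll x (tau x A)) <-> forall w, fmodels (generated F w) A.
Proof.
  intros HE HA Hoc; simpl.
  assert (Hw : forall w, fsat F (upd g x w) (tau x A) <-> fmodels (generated F w) A).
  { intros w. rewrite <- (fsat_sentence _ A (fun _ => generated_root F w)) by auto.
    apply fsat_tau; [auto | apply upd_eq | intros v Hv; destruct (HA v Hv)]. }
  split; intros H w; apply Hw, H.
Qed.

(** * Typed frames and Ehrenfeucht-Fraisse games *)

(* Types: [0] the irreflexive root, [1] a successor of the root, [2] a point of the
   final cluster unseen from the root. *)
Definition type_rel (i j : nat) : Prop := (i = 0 /\ j = 1) \/ (i <> 0 /\ j <> 0).

Definition typed (F : frame) (ty : world F -> nat) : Prop :=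
  (forall a, ty a <= 2) /\ forall a b, rel F a b <-> type_rel (ty a) (ty b).

Definition type_count (F : frame) (ty : world F -> nat) (t i : nat) : Prop :=
  at_least (fun a => ty a = t) i.

Definition partial_iso (M N : frame) (tyM : world M -> nat) (tyN : world N -> nat)
  (xs : list nat) (g : nat -> world M) (h : nat -> world N) : Prop :=
  forall u v, In u xs -> In v xs -> (g u = g v <-> h u = h v) /\ tyM (g u) = tyN (h u).

Lemma partial_iso_sym M N tyM tyN xs g h :
  partial_iso M N tyM tyN xs g h -> partial_iso N M tyN tyM xs h g.
Proof. intros H u v Hu Hv. destruct (H u v Hu Hv); split; [tauto | auto]. Qed.

Lemma partial_iso_cons M N tyM tyN xs g h y d e :
  partial_iso M N tyM tyN xs g h -> tyM d = tyN e ->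
  (forall u, In u xs -> u <> y -> (g u = d <-> h u = e)) ->
  partial_iso M N tyM tyN (y :: xs) (upd g y d) (upd h y e).
Proof.
  intros Hiso Hde Hnew u v Hu Hv.
  assert (Hold : forall u, In u (y :: xs) -> u <> y -> In u xs) by (intros ? [] ?; congruence).
  destruct (Nat.eq_dec u y) as [->|Huy]; destruct (Nat.eq_dec v y) as [->|Hvy];
    rewrite ?upd_eq, ?(upd_neq _ _ _ _ Huy), ?(upd_neq _ _ _ _ Hvy).
  - tauto.
  - specialize (Hnew v (Hold v Hv Hvy) Hvy). split; [split; intros; symmetry; apply Hnew; auto | auto].
  - assert (HuS := Hold u Hu Huy). split; [apply Hnew; auto | apply (Hiso u u HuS HuS)].
  - apply Hiso; auto.
Qed.

Section Extension.
Variables (M N : frame) (tyM : world M -> nat) (tyN : world N -> nat) (q : nat).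
Hypothesis tyN_le : forall e, tyN e <= 2.
Hypothesis same_counts :
  forall t i, t <= 2 -> i <= q -> (type_count M tyM t i <-> type_count N tyN t i).

(* A point [e] new to [h] has a new partner [d] of the same type: the type-[t] values
   of [g] and [h] on [xs] are equally many, and at most [length xs] of them. *)
Lemma partial_iso_extend xs g h y e : partial_iso M N tyM tyN xs g h -> length xs < q ->
  exists d, partial_iso M N tyM tyN (y :: xs) (upd g y d) (upd h y e).
Proof.
  intros Hiso HSq.
  destruct (classic (exists u, In u xs /\ u <> y /\ h u = e)) as [[u [Hu [Huy <-]]]|Hfresh].
  { exists (g u). apply partial_iso_cons; [auto | apply (Hiso u u Hu Hu) |].
    intros v Hv _. apply Hiso; auto. }
  set (t := tyN e).
  destruct (dedup_by h (fun u => u <> y /\ tyN (h u) = t) xs) as [U [HUS [HUnd HUcov]]].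
  assert (HUlen : length U <= length xs).
  { apply NoDup_incl_length; [eapply NoDup_map_inv; eauto | intros u Hu; apply HUS, Hu]. }
  assert (HN : type_count N tyN t (S (length U))).
  { exists (e :: map h U). repeat split.
    - constructor; auto. intros Hin. apply in_map_iff in Hin as [u [Hue Hu]].
      apply Hfresh. exists u. destruct (HUS u Hu) as [? []]. auto.
    - simpl; rewrite length_map; auto.
    - intros a [<-|Ha]; auto. apply in_map_iff in Ha as [u [<- Hu]]. apply HUS, Hu. }
  apply same_counts in HN as [LM [HLnd [HLlen HLt]]]; [| apply tyN_le | lia].
  assert (HgU : NoDup (map g U)).
  { apply (NoDup_map_transfer h); auto.
    intros u v Hu Hv. apply Hiso; apply HUS; auto. }
  destruct (classic (exists d, In d LM /\ ~ In d (map g U))) as [[d [HdL HdU]]|Hall].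
  2:{ exfalso. enough (length LM <= length (map g U)) by (rewrite length_map in *; lia).
      apply NoDup_incl_length; auto. intros d Hd. apply NNPP; eauto. }
  exists d. apply partial_iso_cons; [auto | apply HLt, HdL |].
  intros u Hu Huy. split; intros Heq; [exfalso | destruct Hfresh; eauto].
  destruct (classic (tyN (h u) = t)) as [Hut|Hut].
  - destruct (HUcov u Hu (conj Huy Hut)) as [u' [Hu' Hhu]].
    apply HdU. rewrite <- Heq. apply in_map_iff. exists u'. split; auto.
    apply Hiso; auto; apply HUS; auto.
  - apply Hut. destruct (Hiso u u Hu Hu) as [_ <-]. rewrite Heq. apply HLt, HdL.
Qed.
End Extension.

Lemma partial_iso_fsat M N tyM tyN q B j xs g h :
  typed M tyM -> typed N tyN ->
  (forall t i, t <= 2 -> i <= q -> (type_count M tyM t i <-> type_count N tyN t i)) ->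
  qd B <= j -> (forall v, free_in v B -> In v xs) -> length xs + j <= q ->
  partial_iso M N tyM tyN xs g h -> (fsat M g B <-> fsat N h B).
Proof.
  intros [HbM HrM] [HbN HrN] Hq.
  revert j xs g h; induction B as [y z|y z|B IH|B1 IH1 B2 IH2|y B IH];
    intros j xs g h Hj Hfree Hlen Hiso; simpl in *.
  - assert (Hy : In y xs) by auto. assert (Hz : In z xs) by auto.
    rewrite HrM, HrN, (proj2 (Hiso y y Hy Hy)), (proj2 (Hiso z z Hz Hz)); tauto.
  - apply Hiso; auto.
  - rewrite (IH j xs g h); auto; tauto.
  - rewrite (IH1 j xs g h), (IH2 j xs g h); auto; try lia; tauto.
  - assert (Hfree' : forall v, free_in v B -> In v (y :: xs)).
    { intros v Hv. destruct (Nat.eq_dec v y); [left | right; apply Hfree]; auto. }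
    split.
    + intros H e.
      destruct (partial_iso_extend M N tyM tyN q HbN Hq xs g h y e Hiso) as [d Hd]; [lia|].
      apply (IH (j - 1) (y :: xs) (upd g y d)); simpl; auto; lia.
    + intros H d.
      destruct (partial_iso_extend N M tyN tyM q HbM (fun t i Ht Hi => iff_sym (Hq t i Ht Hi))
                  xs h g y d (partial_iso_sym _ _ _ _ _ _ _ Hiso)) as [e He]; [lia|].
      apply (IH (j - 1) (y :: xs) _ (upd h y e)); simpl; auto using partial_iso_sym; lia.
Qed.

Lemma typed_fmodels_iff M N tyM tyN A :
  typed M tyM -> typed N tyN -> inhabited (world M) -> inhabited (world N) ->
  (forall t i, t <= 2 -> i <= qd A -> (type_count M tyM t i <-> type_count N tyN t i)) ->
  sentence A -> (fmodels M A <-> fmodels N A).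
Proof.
  intros HM HN [a] [b] Hq HA.
  rewrite <- (fsat_sentence M A (fun _ => a)), <- (fsat_sentence N A (fun _ => b)) by auto.
  apply (partial_iso_fsat M N tyM tyN (qd A) A (qd A) []); auto.
  intros u v [].
Qed.

(* Points of [M] outside the image of [iota] are sent to a point of the same type,
   or of type [1] when [N] has no point of their type; this is a p-morphism onto [N]
   as soon as [N] has the shape of a flower. *)
Lemma typed_embedding_valid M N tyM tyN (iota : world N -> world M) psi :
  typed M tyM -> typed N tyN ->
  (forall e e', iota e = iota e' -> e = e') -> (forall e, tyM (iota e) = tyN e) ->
  (exists e, tyN e = 1) -> ((exists e, tyN e = 2) -> exists e, tyN e = 0) ->
  mvalid M psi -> mvalid N psi.
Proof.
  intros [HbM HrM] [HbN HrN] Hinj Hty H1 H20.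
  set (present i := exists e, tyN e = i).
  set (kappa i := if excluded_middle_informative (present i) then i else 1).
  assert (Hkappa : forall i, present (kappa i)).
  { intros i; unfold kappa; destruct excluded_middle_informative; auto. }
  assert (Hforth : forall i j, type_rel i j -> type_rel (kappa i) (kappa j)).
  { intros i j; unfold kappa, type_rel.
    destruct (excluded_middle_informative (present i));
      destruct (excluded_middle_informative (present j)); lia. }
  assert (Hback : forall i e, type_rel (kappa i) (tyN e) -> type_rel i (tyN e)).
  { intros i e; unfold kappa, type_rel.
    destruct (excluded_middle_informative (present i)) as [|Hi]; auto.
    destruct (Nat.eq_dec i 0) as [->|]; [|lia].
    assert (tyN e <> 2) by (intros He; apply Hi, H20; exists e; auto).
    assert (tyN e <> 0) by (intros He; apply Hi; exists e; auto).
    specialize (HbN e). lia. }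
  set (f u := match excluded_middle_informative (exists e, iota e = u) with
              | left H => proj1_sig (constructive_indefinite_description _ H)
              | right _ => proj1_sig (constructive_indefinite_description _ (Hkappa (tyM u)))
              end).
  assert (Hf_iota : forall e, f (iota e) = e).
  { intros e; unfold f. destruct excluded_middle_informative as [H|H]; [|exfalso; eauto].
    destruct constructive_indefinite_description; simpl; auto. }
  assert (Hf_ty : forall u, tyN (f u) = kappa (tyM u)).
  { intros u; unfold f. destruct excluded_middle_informative as [H|H];
      destruct constructive_indefinite_description as [e He]; simpl; auto.
    subst u. rewrite Hty. unfold kappa.
    destruct excluded_middle_informative as [|Hn]; [auto | destruct Hn; exists e; auto]. }
  apply (pmorphism_valid M N f); [split | intros e; exists (iota e); auto].
  - intros a b Hab. apply HrN. rewrite !Hf_ty. apply Hforth, HrM, Hab.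
  - intros a e Hae. exists (iota e). split; auto.
    apply HrM. rewrite Hty. apply Hback. rewrite <- Hf_ty. apply HrN, Hae.
Qed.

Lemma type_count_lists M N tyM tyN t (c : nat) :
  (forall i, type_count N tyN t i <-> i <= c) -> type_count M tyM t c ->
  exists lN lM, NoDup lN /\ (forall e, tyN e = t <-> In e lN) /\ NoDup lM /\
    (forall d, In d lM -> tyM d = t) /\ Forall2 (fun e d => tyM d = tyN e) lN lM.
Proof.
  intros HcN [lM [HMnd [HMlen HMt]]].
  destruct (proj2 (HcN c) (le_n _)) as [lN [HNnd [HNlen HNt]]].
  exists lN, lM. repeat split; auto.
  - intros He. apply (at_least_maximal (fun a => tyN a = t) lN); auto.
    rewrite HNlen. change (~ type_count N tyN t (S c)). rewrite HcN. lia.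
  - apply Forall2_all; [congruence|]. intros e d He Hd. rewrite HNt, HMt; auto.
Qed.

(* Match the type classes of [N] blockwise with equally long lists in [M]. *)
Lemma typed_counts_embedding M N tyM tyN (cnt : nat -> nat) (d0 : world M) :
  typed N tyN -> (forall t i, t <= 2 -> (type_count N tyN t i <-> i <= cnt t)) ->
  (forall t, t <= 2 -> type_count M tyM t (cnt t)) ->
  exists iota : world N -> world M,
    (forall e e', iota e = iota e' -> e = e') /\ forall e, tyM (iota e) = tyN e.
Proof.
  intros [HbN _] HcN HcM.
  destruct (type_count_lists M N tyM tyN 0 (cnt 0) (fun i => HcN 0 i ltac:(lia)) (HcM 0 ltac:(lia)))
    as [lN0 [lM0 [? [Hcov0 [? [Ht0 ?]]]]]].
  destruct (type_count_lists M N tyM tyN 1 (cnt 1) (fun i => HcN 1 i ltac:(lia)) (HcM 1 ltac:(lia)))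
    as [lN1 [lM1 [? [Hcov1 [? [Ht1 ?]]]]]].
  destruct (type_count_lists M N tyM tyN 2 (cnt 2) (fun i => HcN 2 i ltac:(lia)) (HcM 2 ltac:(lia)))
    as [lN2 [lM2 [? [Hcov2 [? [Ht2 ?]]]]]].
  assert (Hdisj : forall t t' (l l' : list (world M)), t <> t' ->
             (forall d, In d l -> tyM d = t) -> (forall d, In d l' -> tyM d = t') ->
             forall d, In d l -> ~ In d l').
  { intros t t' l l' Htt' Hl Hl' d Hd Hd'. apply Htt'. rewrite <- (Hl d), <- (Hl' d); auto. }
  destruct (Forall2_injection (fun e d => tyM d = tyN e) d0
              (lN0 ++ lN1 ++ lN2) (lM0 ++ lM1 ++ lM2)) as [iota Hiota].
  { apply NoDup_app; [auto | apply NoDup_app; auto; exact (Hdisj 1 2 _ _ ltac:(lia) Ht1 Ht2) |].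
    intros d Hd Hd'. apply in_app_or in Hd' as [Hd'|Hd'].
    - exact (Hdisj 0 1 _ _ ltac:(lia) Ht0 Ht1 d Hd Hd').
    - exact (Hdisj 0 2 _ _ ltac:(lia) Ht0 Ht2 d Hd Hd'). }
  { repeat apply Forall2_app; auto. }
  assert (Hcov : forall e, In e (lN0 ++ lN1 ++ lN2)).
  { intros e. specialize (HbN e). rewrite !in_app_iff, <- Hcov0, <- Hcov1, <- Hcov2. lia. }
  exists iota; split.
  - intros e e' He. apply (Hiota e (Hcov e)); auto.
  - intros e. apply (Hiota e (Hcov e)).
Qed.

Lemma typed_counts_valid M N tyM tyN (cnt : nat -> nat) psi :
  typed M tyM -> typed N tyN ->
  (forall t i, t <= 2 -> (type_count N tyN t i <-> i <= cnt t)) ->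
  (forall t, t <= 2 -> type_count M tyM t (cnt t)) ->
  1 <= cnt 1 -> (1 <= cnt 2 -> 1 <= cnt 0) ->
  mvalid M psi -> mvalid N psi.
Proof.
  intros HM HN HcN HcM H1 H20.
  assert (Hex : forall t, t <= 2 -> 1 <= cnt t -> exists e, tyN e = t)
    by (intros t Ht Hc; apply at_least_1, HcN; auto).
  destruct (proj1 (at_least_1 _) (at_least_le _ _ 1 (HcM 1 ltac:(lia)) H1)) as [d0 _].
  destruct (typed_counts_embedding M N tyM tyN cnt d0) as [iota [Hinj Hty]]; auto.
  apply (typed_embedding_valid M N tyM tyN iota); auto.
  intros [e He]. apply Hex, H20; [lia|]. apply HcN; [lia|]. apply at_least_1; eauto.
Qed.

(** * Flowers *)

Definition petal_type (m n : nat) (a : world (flower_pos m n)) : nat :=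
  if proj1_sig a =? 0 then 0 else if proj1_sig a <=? m then 1 else 2.

Lemma petal_type_spec m n a :
  (petal_type m n a = 0 /\ proj1_sig a = 0) \/
  (petal_type m n a = 1 /\ 1 <= proj1_sig a <= m) \/
  (petal_type m n a = 2 /\ m < proj1_sig a <= m + n).
Proof.
  unfold petal_type. destruct a as [i Hi]; simpl.
  destruct (Nat.eqb_spec i 0); [lia|]. destruct (Nat.leb_spec i m); lia.
Qed.

Lemma flower_pos_typed m n : typed (flower_pos m n) (petal_type m n).
Proof.
  split; intros a; [destruct (petal_type_spec m n a); lia|].
  intros b; simpl. unfold type_rel.
  pose proof (petal_type_spec m n a); pose proof (petal_type_spec m n b).
  pose proof (proj2_sig a); pose proof (proj2_sig b); simpl in *. lia.
Qed.

Lemma cluster_typed m : typed (cluster m) (fun _ => 1).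
Proof. split; intros; unfold type_rel; simpl; lia. Qed.

(* For the cluster [F_m^-1], the count [Z.to_nat (-1)] of type-[2] points is [0]. *)
Definition flower_count (m : nat) (n : Z) (t : nat) : nat :=
  match t with 0 => if (n <? 0)%Z then 0 else 1 | 1 => m | _ => Z.to_nat n end.

Lemma flower_typed (m : nat) (n : Z) : (-1 <= n)%Z ->
  exists ty, typed (flower m n) ty /\
    forall t i, t <= 2 -> (type_count (flower m n) ty t i <-> i <= flower_count m n t).
Proof.
  intros Hn. unfold flower, flower_count. destruct (Z.ltb_spec n 0).
  - exists (fun _ => 1); split; [apply cluster_typed|]. intros t i Ht.
    destruct t as [|[|t]]; unfold type_count.
    + rewrite at_least_empty by lia. lia.
    + apply (at_least_interval (fun i => 1 <= i <= m) _ 1 m); [|lia].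
      intros a; pose proof (proj2_sig a); simpl in *; lia.
    + rewrite at_least_empty by lia. lia.
  - set (n' := Z.to_nat n).
    exists (petal_type m n'); split; [apply flower_pos_typed|]. intros t i Ht.
    unfold type_count. pose (st := match t with 0 => 0 | 1 => 1 | _ => m + 1 end).
    apply (at_least_interval (fun i => i <= m + n') _ st); [|destruct t as [|[|]]; simpl; lia].
    intros a; pose proof (petal_type_spec m n' a).
    destruct t as [|[|[|]]]; simpl; lia.
Qed.

Lemma typed_euclid F ty : typed F ty -> euclid F.
Proof. intros [Hb Hr] s t u H1 H2. apply Hr in H1, H2. apply Hr. unfold type_rel in *. lia. Qed.

Lemma type_count_inhabited F ty t : type_count F ty t 1 -> inhabited (world F).
Proof. intros [[|a] [_ [? _]]]; [discriminate | constructor; exact a]. Qed.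

Lemma flower_euclid m n : (-1 <= n)%Z -> euclid (flower m n).
Proof. intros Hn. destruct (flower_typed m n Hn) as [ty [Hty _]]. eapply typed_euclid, Hty. Qed.

Lemma flower_inhabited m n : (-1 <= n)%Z -> 1 <= m \/ (0 <= n)%Z -> inhabited (world (flower m n)).
Proof.
  intros Hn Hmn. destruct (flower_typed m n Hn) as [ty [_ Hc]].
  destruct Hmn; [apply (type_count_inhabited _ ty 1) | apply (type_count_inhabited _ ty 0)];
    apply Hc; simpl; try lia. destruct (Z.ltb_spec n 0); lia.
Qed.

Lemma flower_valid_mono (m m' : nat) (n n' : Z) psi :
  1 <= m' <= m -> (-1 <= n' <= n)%Z -> mvalid (flower m n) psi -> mvalid (flower m' n') psi.
Proof.
  intros Hm Hn.
  destruct (flower_typed m n ltac:(lia)) as [ty [Hty Hc]].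
  destruct (flower_typed m' n' ltac:(lia)) as [ty' [Hty' Hc']].
  apply (typed_counts_valid _ _ ty ty' (flower_count m' n')); auto.
  - intros t Ht. apply Hc; auto. unfold flower_count.
    destruct t as [|[|]]; [destruct (Z.ltb_spec n' 0), (Z.ltb_spec n 0) | |]; lia.
  - unfold flower_count; lia.
  - unfold flower_count; destruct (Z.ltb_spec n' 0); lia.
Qed.

Lemma flower_fmodels_iff (m m' : nat) (n n' : Z) A :
  1 <= m -> 1 <= m' -> (-1 <= n)%Z -> (-1 <= n')%Z -> sentence A ->
  (forall t i, t <= 2 -> i <= qd A -> (i <= flower_count m n t <-> i <= flower_count m' n' t)) ->
  fmodels (flower m n) A <-> fmodels (flower m' n') A.
Proof.
  intros Hm Hm' Hn Hn' HA Hcnt.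
  destruct (flower_typed m n Hn) as [ty [Hty Hc]].
  destruct (flower_typed m' n' Hn') as [ty' [Hty' Hc']].
  apply (typed_fmodels_iff _ _ ty ty'); try apply flower_inhabited; auto.
  intros t i Ht Hi. rewrite Hc, Hc'; auto.
Qed.

Lemma flower_truncate (m : nat) (n : Z) (Q : nat) A :
  1 <= m -> (-1 <= n)%Z -> 1 <= Q -> qd A <= Q -> sentence A ->
  fmodels (flower m n) A <-> fmodels (flower (Nat.min m Q) (Z.min n (Z.of_nat Q))) A.
Proof.
  intros Hm Hn HQ HqQ HA. apply flower_fmodels_iff; auto; try lia.
  intros t i Ht Hi. unfold flower_count.
  destruct t as [|[|]]; [destruct (Z.ltb_spec n 0), (Z.ltb_spec (Z.min n (Z.of_nat Q)) 0) | |]; lia.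
Qed.

Definition gen_pred (F : frame) (w : world F) (t : nat) (v : world F) : Prop :=
  match t with 0 => v = w /\ ~ rel F w w | 1 => rel F w v | _ => unseen F w v end.

Definition gen_type (F : frame) (w : world F) (u : world (generated F w)) : nat :=
  if excluded_middle_informative (rel F w (proj1_sig u)) then 1
  else if excluded_middle_informative (proj1_sig u = w) then 0 else 2.

Section Generated.
Variables (F : frame) (HE : euclid F) (w : world F).

Lemma gen_type_spec u t : t <= 2 -> gen_type F w u = t <-> gen_pred F w t (proj1_sig u).
Proof.
  intros Ht. destruct u as [v Hv]; unfold gen_type, gen_pred, unseen; simpl.
  assert (~ (v = w /\ two_step F w v /\ ~ rel F w v)).
  { intros [-> [Hww Hn]]. apply Hn. destruct Hww as [z [_ Hz]]. eapply rel_refl_target; eauto. }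
  destruct t as [|[|[|t]]]; [| | |lia];
    repeat destruct excluded_middle_informative; subst; try destruct Hv as [<-|]; intuition (try lia; try congruence).
Qed.

Lemma generated_typed : typed (generated F w) (gen_type F w).
Proof.
  assert (Hb : forall u, gen_type F w u <= 2).
  { intros u; unfold gen_type; repeat destruct excluded_middle_informative; lia. }
  split; [exact Hb|].
  assert (Hin : forall u, gen_type F w u <> 0 -> two_step F w (proj1_sig u)).
  { intros u Hu. pose proof (Hb u).
    destruct (gen_type F w u) as [|[|[|]]] eqn:Ht; try lia; apply gen_type_spec in Ht; auto.
    - apply rel_two_step; auto.
    - apply Ht. }
  intros u v; simpl; unfold type_rel.
  destruct (Nat.eq_dec (gen_type F w u) 0) as [Hu|Hu].
  - pose proof Hu as Hu'. apply gen_type_spec in Hu' as [-> _]; [|lia].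
    rewrite <- (gen_type_spec v 1) by lia. lia.
  - destruct (Nat.eq_dec (gen_type F w v) 0) as [Hv|Hv].
    + pose proof Hv as Hv'. apply gen_type_spec in Hv' as [-> Hww]; [|lia]. split; [|lia].
      intros Huw. destruct Hww. eapply rel_refl_target; eauto.
    + split; [lia|]. intros _. apply (two_step_rel F HE w); auto.
Qed.

Lemma generated_type_count t i : t <= 2 ->
  type_count (generated F w) (gen_type F w) t i <-> at_least (gen_pred F w t) i.
Proof.
  intros Ht. unfold type_count.
  rewrite (at_least_iff (fun u => gen_type F w u = t) (fun u => gen_pred F w t (proj1_sig u)))
    by (intros; apply gen_type_spec; auto).
  apply (at_least_sig (in_generated F w) (gen_pred F w t)). intros v Hv. destruct t as [|[|]]; simpl in Hv.
  - left; symmetry; apply Hv.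
  - right; apply rel_two_step; auto.
  - right; apply Hv.
Qed.

End Generated.

(* Up to [Q] points of each type, the subframe generated by [w] looks like the
   flower [F_c^n], with [F_0^0] the single irreflexive point. *)
Lemma generated_profile F w Q : euclid F -> 1 <= Q ->
  exists (c : nat) (n : Z), c <= Q /\ (-1 <= n <= Z.of_nat Q)%Z /\ (c = 0 -> n = 0%Z) /\
    forall t i, t <= 2 -> i <= Q ->
      (type_count (generated F w) (gen_type F w) t i <-> i <= flower_count c n t).
Proof.
  intros HE HQ.
  destruct (at_least_truncate (rel F w) Q) as [c [HcQ Hc]].
  assert (Hsucc : forall v, rel F w v -> 1 <= c).
  { intros v Hv. apply Hc; [lia|]. apply at_least_1; eauto. }
  destruct (classic (rel F w w)) as [Hww|Hww].
  - exists c, (-1)%Z. split; [auto | split; [lia | split; [intros ->; specialize (Hsucc w Hww); lia|]]].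
    intros t i Ht Hi. rewrite generated_type_count by auto.
    destruct t as [|[|[|]]]; simpl; try lia; [| apply Hc, Hi |].
    + rewrite at_least_empty; [lia | intros v; simpl; tauto].
    + rewrite at_least_empty; [lia|]. intros v [Hv Hn]. apply Hn, (refl_in_generated F HE); auto.
      right; auto.
  - destruct (at_least_truncate (unseen F w) Q) as [c2 [Hc2Q Hc2]].
    exists c, (Z.of_nat c2). split; [auto | split; [lia | split]].
    + intros ->. enough (~ 1 <= c2) by lia. intros H1.
      destruct (proj2 (Hc2 1 HQ) H1) as [[|v] [_ [? Hv]]]; [discriminate|].
      destruct (Hv v (or_introl eq_refl)) as [[z [Hz _]] _]. specialize (Hsucc z Hz). lia.
    + intros t i Ht Hi. rewrite generated_type_count by auto.
      destruct t as [|[|[|]]]; simpl; try lia; [| apply Hc, Hi | rewrite Nat2Z.id; apply Hc2, Hi].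
      rewrite (at_least_singleton _ w); [destruct (Z.ltb_spec (Z.of_nat c2) 0); lia | simpl; tauto |].
      intros v; simpl; tauto.
Qed.

(** * Modal formulas describing flowers *)

Definition fits_flower (F : frame) (w : world F) (a : nat) (b : Z) : Prop :=
  at_least (rel F w) a /\ ((0 <= b)%Z -> ~ rel F w w /\ at_least (unseen F w) (Z.to_nat b)).

Lemma fits_flower_profile F w Q (c : nat) (n : Z) (a : nat) (b : Z) :
  euclid F -> 1 <= Q -> (-1 <= n)%Z ->
  (forall t i, t <= 2 -> i <= Q ->
     (type_count (generated F w) (gen_type F w) t i <-> i <= flower_count c n t)) ->
  a <= Q -> (-1 <= b <= Z.of_nat Q)%Z ->
  fits_flower F w a b <-> a <= c /\ (b <= n)%Z.
Proof.
  intros HE HQ Hn Hcnt Ha Hb.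
  assert (Hcount : forall t i, t <= 2 -> i <= Q ->
            at_least (gen_pred F w t) i <-> i <= flower_count c n t).
  { intros t i Ht Hi. rewrite <- generated_type_count; auto. }
  assert (Hirr : ~ rel F w w <-> 1 <= flower_count c n 0).
  { rewrite <- (Hcount 0 1), at_least_1 by lia. simpl. split; [eauto | intros [v [_ ?]]; auto]. }
  unfold fits_flower. rewrite Hirr, (Hcount 1 a), (Hcount 2 (Z.to_nat b)) by lia.
  unfold flower_count. destruct (Z.ltb_spec n 0); lia.
Qed.

Definition MTop : mform := MNeg MBot.
Definition MAnd (a b : mform) : mform := MNeg (MOr (MNeg a) (MNeg b)).
Definition mconj (l : list mform) : mform := fold_right MAnd MTop l.

Lemma msat_and F V w a b : msat F V w (MAnd a b) <-> msat F V w a /\ msat F V w b.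
Proof. simpl. split; [intros H; split; apply NNPP; tauto | tauto]. Qed.

Lemma msat_conj F V w l : msat F V w (mconj l) <-> forall f, In f l -> msat F V w f.
Proof.
  induction l as [|a l IH]; simpl mconj; [simpl; tauto|].
  rewrite msat_and, IH. simpl. split; [intros [? ?] f [<-|]; auto | auto].
Qed.

Lemma msat_dia F V w f : msat F V w (MDia f) <-> exists v, rel F w v /\ msat F V v f.
Proof.
  simpl. split; [|firstorder].
  intros H. apply NNPP; intro Hn. apply H. intros v Hv Hf. apply Hn; eauto.
Qed.

Lemma msat_dia2 F V w f :
  msat F V w (MDia (MDia f)) <-> exists v, two_step F w v /\ msat F V v f.
Proof.
  rewrite msat_dia. setoid_rewrite msat_dia. unfold two_step. firstorder.
Qed.

(* The [i]-th [D]-witness satisfies [p_(o+i)] but no earlier [p_(o+j)], so the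
   witnesses are pairwise distinct. *)
Definition distinct_marks (o a : nat) (D : mform -> mform) : mform :=
  mconj (map (fun i => D (MAnd (MVar (o + i)) (mconj (map (fun j => MNeg (MVar (o + j))) (seq 0 i)))))
             (seq 0 a)).

Definition marked (X : Type) (P : X -> Prop) (V : nat -> X -> Prop) (o a : nat) : Prop :=
  forall i, i < a -> exists v, P v /\ V (o + i) v /\ forall j, j < i -> ~ V (o + j) v.

Lemma msat_distinct_marks F V w o a D (P : world F -> Prop) :
  (forall f, msat F V w (D f) <-> exists v, P v /\ msat F V v f) ->
  msat F V w (distinct_marks o a D) <-> marked _ P V o a.
Proof.
  intros HD. unfold distinct_marks, marked. rewrite msat_conj. split.
  - intros H i Hi.
    assert (Hin : In i (seq 0 a)) by (apply in_seq; lia).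
    destruct (proj1 (HD _) (H _ (in_map _ _ _ Hin))) as [v [Hv Hf]].
    apply msat_and in Hf as [Hf1 Hf2]. rewrite msat_conj in Hf2.
    exists v; repeat split; auto. intros j Hj.
    apply (Hf2 (MNeg (MVar (o + j)))), (in_map (fun j => MNeg (MVar (o + j)))), in_seq; lia.
  - intros H f Hf. apply in_map_iff in Hf as [i [<- Hi]]. apply in_seq in Hi.
    apply HD. destruct (H i ltac:(lia)) as [v [Hv [Hv1 Hv2]]]. exists v; split; auto.
    apply msat_and; split; auto. apply msat_conj. intros g Hg.
    apply in_map_iff in Hg as [j [<- Hj]]. apply in_seq in Hj. apply Hv2; lia.
Qed.

Lemma marked_at_least X (P : X -> Prop) V o a : marked X P V o a -> at_least P a.
Proof.
  intros H.
  enough (Hl : exists l, NoDup l /\ length l = a /\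
                 forall x, In x l -> P x /\ exists j, j < a /\ V (o + j) x).
  { destruct Hl as [l [Hnd [Hlen Hl]]]. exists l; repeat split; auto. apply Hl. }
  induction a as [|a IH].
  - exists []; split; [constructor | split; [reflexivity | intros ? []]].
  - destruct IH as [l [Hnd [Hlen Hl]]]; [intros i Hi; apply H; lia|].
    destruct (H a ltac:(lia)) as [v [Hv [Hva Hv']]].
    exists (v :: l); split; [|split; [simpl; lia|]].
    + constructor; auto. intros Hin. destruct (Hl v Hin) as [_ [j [Hj Hvj]]]. apply (Hv' j); auto.
    + intros x [<-|Hx]; [split; eauto|].
      destruct (Hl x Hx) as [Hpx [j [Hj Hxj]]]. split; auto. exists j; split; auto.
Qed.

Definition list_val {X} (o : nat) (l : list X) (p : nat) (v : X) : Prop :=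
  o <= p /\ nth_error l (p - o) = Some v.

Lemma list_val_shift {X} o (l : list X) i v : list_val o l (o + i) v <-> nth_error l i = Some v.
Proof. unfold list_val. replace (o + i - o) with i by lia. split; [tauto | split; [lia | auto]]. Qed.

Lemma list_val_range {X} o (l : list X) p v : list_val o l p v -> o <= p < o + length l.
Proof.
  intros [Hop Hp]. enough (p - o < length l) by lia.
  apply nth_error_Some. congruence.
Qed.

Lemma list_marked X (P : X -> Prop) (V : nat -> X -> Prop) o l :
  NoDup l -> (forall x, In x l -> P x) ->
  (forall i v, i < length l -> V (o + i) v <-> nth_error l i = Some v) ->
  marked X P V o (length l).
Proof.
  intros Hnd HP HV i Hi.
  destruct (nth_error l i) as [v|] eqn:E; [|apply nth_error_None in E; lia].
  exists v; split; [apply HP; eapply nth_error_In; eauto | split; [apply HV; auto |]].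
  intros j Hj Hv. apply HV in Hv; [|lia].
  rewrite NoDup_nth_error in Hnd. enough (j = i) by lia. apply Hnd; [lia | congruence].
Qed.

(* Variables [p_0 .. p_(a-1)] mark [a] successors of the root, [p_a .. p_(a+b-1)]
   mark [b] unseen points, and [p_(a+b)] holds exactly at the root, witnessing that it
   is irreflexive. *)
Definition flower_formula (a : nat) (b : Z) : mform :=
  let bn := Z.to_nat b in
  MAnd (distinct_marks 0 a MDia)
    (if (b <? 0)%Z then MTop else
     MAnd (MAnd (MVar (a + bn)) (MBox (MNeg (MVar (a + bn)))))
       (MAnd (distinct_marks a bn (fun f => MDia (MDia f)))
             (mconj (map (fun i => MBox (MNeg (MVar (a + i)))) (seq 0 bn))))).

Lemma msat_flower_formula F V w a b :
  msat F V w (flower_formula a b) <->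
  marked _ (rel F w) V 0 a /\
  ((0 <= b)%Z -> V (a + Z.to_nat b) w /\ (forall v, rel F w v -> ~ V (a + Z.to_nat b) v) /\
     marked _ (two_step F w) V a (Z.to_nat b) /\
     forall i v, i < Z.to_nat b -> rel F w v -> ~ V (a + i) v).
Proof.
  unfold flower_formula. rewrite msat_and, (msat_distinct_marks _ _ _ _ _ _ (rel F w)) by apply msat_dia.
  destruct (Z.ltb_spec b 0); [simpl; intuition lia|].
  rewrite !msat_and, (msat_distinct_marks _ _ _ _ _ _ (two_step F w)), msat_conj by apply msat_dia2.
  simpl. split.
  - intros [Hm [[Hr Hbox] [Hm2 Hnot]]]. split; [auto|]. intros _. repeat split; auto.
    intros i v Hi. apply (Hnot (MBox (MNeg (MVar (a + i))))).
    apply (in_map (fun i => MBox (MNeg (MVar (a + i))))), in_seq; lia.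
  - intros [Hm Hb]. destruct (Hb ltac:(lia)) as [Hr [Hbox [Hm2 Hnot]]]. repeat split; auto.
    intros f Hf. apply in_map_iff in Hf as [i [<- Hi]]. apply in_seq in Hi.
    intros v Hv. apply Hnot; auto; lia.
Qed.

Lemma flower_formula_fits F V w a b : msat F V w (flower_formula a b) -> fits_flower F w a b.
Proof.
  rewrite msat_flower_formula. intros [Hm Hb]. split; [eapply marked_at_least; eauto|].
  intros Hb0. destruct (Hb Hb0) as [Hr [Hbox [Hm2 Hnot]]].
  split; [intros Hww; exact (Hbox w Hww Hr)|].
  apply (marked_at_least _ _ V a). intros i Hi. destruct (Hm2 i Hi) as [v [Hv [Hvi Hvj]]].
  exists v; repeat split; auto. intros Hwv. exact (Hnot i v Hi Hwv Hvi).
Qed.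

Lemma fits_flower_formula F w a b : fits_flower F w a b -> exists V, msat F V w (flower_formula a b).
Proof.
  intros [[l1 [Hnd1 [<- HP1]]] Hb]. set (bn := Z.to_nat b).
  destruct (Z_le_gt_dec 0 b) as [Hpos|Hneg].
  2:{ exists (list_val 0 l1). apply msat_flower_formula. split; [|lia].
      apply list_marked; auto. intros i v _. apply (list_val_shift 0). }
  destruct (Hb Hpos) as [Hww [l2 [Hnd2 [Hl2 HP2]]]].
  exists (fun p v => list_val 0 l1 p v \/ list_val (length l1) l2 p v \/
                     (p = length l1 + bn /\ v = w)).
  apply msat_flower_formula. split; [|intros _; split; [|split; [|split]]].
  - apply list_marked; auto. intros i v Hi. rewrite <- (list_val_shift 0). split; [|tauto].
    intros [|[Hv|[Hv _]]]; auto; [apply list_val_range in Hv |]; simpl in *; lia.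
  - simpl; auto.
  - intros v Hv [Hv'|[Hv'|[_ ->]]]; [apply list_val_range in Hv'; lia.. | auto].
  - rewrite <- Hl2. apply list_marked; auto; [intros x Hx; apply HP2, Hx|].
    intros i v Hi. rewrite <- (list_val_shift (length l1)). split; [|tauto].
    intros [Hv|[|[Hv _]]]; auto; [apply list_val_range in Hv |]; lia.
  - intros i v Hi Hwv [Hv|[Hv|[Hv _]]].
    + apply list_val_range in Hv. lia.
    + apply list_val_shift in Hv. apply (HP2 v); auto. eapply nth_error_In; eauto.
    + lia.
Qed.

Lemma flower_formula_sat F w a b :
  (exists V, msat F V w (flower_formula a b)) <-> fits_flower F w a b.
Proof.
  split; [intros [V HV]; eapply flower_formula_fits, HV | apply fits_flower_formula].
Qed.

(** * Definability *)

Lemma flower_FrL L phi (m : nat) (n : Z) : (forall f, L f <-> K5plus phi f) ->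
  1 <= m -> (-1 <= n)%Z -> mvalid (flower m n) phi -> FrL L (flower m n).
Proof.
  intros HL Hm Hn Hphi. apply (FrL_K5plus L phi); auto.
  split; [apply flower_inhabited | split; [apply flower_euclid|]]; auto.
Qed.

(* Type counts up to [Q >= qd A] suffice for the Ehrenfeucht-Fraisse argument. *)
Lemma generated_flower F w phi A (Q : nat) : euclid F -> mvalid F phi -> sentence A ->
  qd A <= Q -> 1 <= Q ->
  exists (c : nat) (n : Z), c <= Q /\ (-1 <= n <= Z.of_nat Q)%Z /\
    ((forall v, ~ rel F w v) <-> c = 0) /\ (c = 0 -> n = 0%Z) /\
    (fmodels (generated F w) A <-> fmodels (flower c n) A) /\
    (1 <= c -> mvalid (flower c n) phi) /\
    (forall a b, a <= Q -> (-1 <= b <= Z.of_nat Q)%Z ->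
       fits_flower F w a b <-> a <= c /\ (b <= n)%Z).
Proof.
  intros HE Hphi HA HqQ HQ.
  destruct (generated_profile F w Q HE HQ) as [c [n [HcQ [HnQ [Hc0 Hcnt]]]]].
  destruct (flower_typed c n ltac:(lia)) as [ty [Hty Hcf]].
  assert (Hfits : forall a b, a <= Q -> (-1 <= b <= Z.of_nat Q)%Z ->
            fits_flower F w a b <-> a <= c /\ (b <= n)%Z)
    by (intros; apply (fits_flower_profile F w Q c n); auto; lia).
  assert (Hsucc : (forall v, ~ rel F w v) <-> c = 0).
  { specialize (Hfits 1 (-1)%Z ltac:(lia) ltac:(lia)). unfold fits_flower in Hfits.
    rewrite at_least_1 in Hfits. split.
    - intros Hno. enough (~ 1 <= c) by lia. intros Hc.
      destruct (proj2 Hfits (conj Hc (proj1 HnQ))) as [[v Hv] _]. apply (Hno v Hv).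
    - intros -> v Hv. enough (1 <= 0) by lia. apply Hfits. split; [eauto | lia]. }
  assert (Hmodels : fmodels (generated F w) A <-> fmodels (flower c n) A).
  { apply (typed_fmodels_iff _ _ (gen_type F w) ty); auto using generated_typed.
    - constructor; exact (generated_root F w).
    - apply flower_inhabited; [lia|].
      destruct (Nat.eq_dec c 0) as [Hc|]; [specialize (Hc0 Hc)|]; lia.
    - intros t i Ht Hi. rewrite Hcnt, Hcf; auto; lia. }
  assert (Hvalid : 1 <= c -> mvalid (flower c n) phi).
  { intros Hc. apply (typed_counts_valid _ _ (gen_type F w) ty (flower_count c n));
      auto using generated_typed, generated_valid.
    - intros t Ht. apply Hcnt; auto. unfold flower_count.
      destruct t as [|[|]]; [destruct (n <? 0)%Z | |]; lia.
    - unfold flower_count; destruct (Z.ltb_spec n 0); lia. }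
  exists c, n; split; [|split; [|split; [|split; [|split; [|split]]]]]; auto.
Qed.

Definition models_downward (phi : mform) (A : fo) (R : nat -> Z -> Prop) : Prop :=
  forall (m m' : nat) (n n' : Z),
    1 <= m -> 1 <= m' -> (-1 <= n)%Z -> (-1 <= n')%Z ->
    mvalid (flower m n) phi -> R m n -> m' <= m -> (n' <= n)%Z ->
    fmodels (flower m n) A -> fmodels (flower m' n') A.

Definition flower_grid (Q : nat) : list (nat * Z) :=
  list_prod (seq 1 Q) (map (fun j => Z.of_nat j - 1)%Z (seq 0 (Q + 2))).

Lemma in_flower_grid Q a b :
  In (a, b) (flower_grid Q) <-> 1 <= a <= Q /\ (-1 <= b <= Z.of_nat Q)%Z.
Proof.
  unfold flower_grid. rewrite in_prod_iff, in_seq, in_map_iff. split.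
  - intros [Ha [j [<- Hj]]]. apply in_seq in Hj. lia.
  - intros [Ha Hb]. split; [lia|]. exists (Z.to_nat (b + 1)). split; [lia|]. apply in_seq. lia.
Qed.

Definition forbid (bad : nat -> Z -> Prop) (l : list (nat * Z)) : mform :=
  mconj (map (fun p => MNeg (flower_formula (fst p) (snd p)))
             (filter (fun p => bval (bad (fst p) (snd p))) l)).

Lemma msat_forbid F V w bad l : msat F V w (forbid bad l) <->
  forall a b, In (a, b) l -> bad a b -> ~ msat F V w (flower_formula a b).
Proof.
  unfold forbid. rewrite msat_conj. split.
  - intros H a b Hab Hbad. apply (H (MNeg (flower_formula a b))).
    apply (in_map (fun p => MNeg (flower_formula (fst p) (snd p))) _ (a, b)).
    apply filter_In; split; [auto | apply bval_true, Hbad].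
  - intros H f Hf. apply in_map_iff in Hf as [[a b] [<- Hab]].
    apply filter_In in Hab as [Hab Hbad]. apply H; [exact Hab | apply bval_true, Hbad].
Qed.

(* Rule out, up to size [qdd A], every flower of [Fr(L)] refuting [A], and the single
   irreflexive point if it refutes [A]. *)
Definition defining_formula (phi : mform) (A : fo) : mform :=
  MAnd (forbid (fun a b => mvalid (flower a b) phi /\ ~ fmodels (flower a b) A) (flower_grid (qdd A)))
       (if bval (fmodels (flower 0 0) A) then MTop else MDia MTop).

Lemma defining_formula_at L phi A G w : (forall f, L f <-> K5plus phi f) -> sentence A ->
  models_downward phi A (fun _ _ => True) -> FrL L G ->
  (forall V, msat G V w (defining_formula phi A)) <-> fmodels (generated G w) A.
Proof.
  intros HL HA Hdown HG. apply (FrL_K5plus L phi G HL) in HG as [_ [HE Hphi]].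
  set (Q := qdd A).
  destruct (generated_flower G w phi A Q HE Hphi HA) as
      [c [n [HcQ [HnQ [Hdead [Hc0 [Hmodels [Hvalid Hfits]]]]]]]]; [unfold Q, qdd; lia.. |].
  assert (Hchi : forall a b, In (a, b) (flower_grid Q) ->
            (exists V, msat G V w (flower_formula a b)) <-> a <= c /\ (b <= n)%Z).
  { intros a b Hab. apply in_flower_grid in Hab. rewrite flower_formula_sat. apply Hfits; lia. }
  rewrite Hmodels. unfold defining_formula. setoid_rewrite msat_and.
  setoid_rewrite msat_forbid. fold Q. unfold bval.
  destruct (Nat.eq_dec c 0) as [->|Hc].
  - rewrite (Hc0 eq_refl). split.
    + intros H. destruct (H (fun _ _ => False)) as [_ Hdia].
      destruct excluded_middle_informative; auto. exfalso.
      apply msat_dia in Hdia as [v [Hv _]]. apply (proj2 Hdead eq_refl v Hv).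
    + intros H0 V. split.
      * intros a b Hab _ Hsat. destruct (proj1 (Hchi a b Hab) (ex_intro _ V Hsat)) as [Ha _].
        apply in_flower_grid in Hab. lia.
      * destruct excluded_middle_informative; [simpl; tauto | contradiction].
  - assert (Hsucc : exists v, rel G w v).
    { apply NNPP; intros Hno. apply Hc, Hdead. intros v Hv. eauto. }
    split.
    + intros H. apply NNPP; intros HnA.
      assert (Hcn : In (c, n) (flower_grid Q)) by (apply in_flower_grid; lia).
      destruct (proj2 (Hchi c n Hcn) (conj (le_n c) (Z.le_refl n))) as [V HV].
      apply (proj1 (H V) c n Hcn); auto. split; auto. apply Hvalid; lia.
    + intros HcA V. split.
      * intros a b Hab [Hphiab HnA] Hsat.
        destruct (proj1 (Hchi a b Hab) (ex_intro _ V Hsat)) as [Hac Hbn].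
        apply in_flower_grid in Hab. apply HnA, (Hdown c a n b); auto; try lia. apply Hvalid; lia.
      * destruct excluded_middle_informative; [simpl; tauto|].
        apply msat_dia. destruct Hsucc as [v Hv]. exists v; split; simpl; auto.
Qed.

Lemma definable_generated L phi A G : (forall f, L f <-> K5plus phi f) ->
  modally_definable (FrL L) A -> FrL L G ->
  fmodels G A <-> forall w, fmodels (generated G w) A.
Proof.
  intros HL [psi Hpsi] HG.
  assert (HE : euclid G) by (apply (FrL_K5plus L phi G HL) in HG; tauto).
  assert (HGw : forall w, FrL L (generated G w)) by (intros; apply (FrL_generated L phi); auto).
  rewrite <- Hpsi by auto. split.
  - intros H w. apply Hpsi, generated_valid; auto.
  - intros H. apply valid_generated; auto. intros w. apply Hpsi, H; auto.
Qed.

Lemma definable_downward L phi A : (forall f, L f <-> K5plus phi f) ->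
  modally_definable (FrL L) A -> models_downward phi A (fun _ _ => True).
Proof.
  intros HL [psi Hpsi] m m' n n' Hm Hm' Hn Hn' Hphi _ Hmm Hnn HA.
  assert (Hphi' : mvalid (flower m' n') phi) by (apply (flower_valid_mono m m' n n'); auto; lia).
  apply Hpsi; [apply (flower_FrL L phi); auto|].
  apply (flower_valid_mono m m' n n'); [lia | lia |].
  apply Hpsi; [apply (flower_FrL L phi)|]; auto.
Qed.

Lemma Pi_truncate L phi k A (m : nat) (n : Z) : (forall f, L f <-> K5plus phi f) ->
  k_bound L k -> 1 <= m -> (-1 <= n)%Z -> mvalid (flower m n) phi ->
  Pi k A (Nat.min m (qdd A)) (Z.min n (Z.of_nat (qdd A))).
Proof.
  intros HL [_ Hk] Hm Hn Hphi.
  assert (Hcore : 2 <= m -> (2 <= n)%Z -> (Z.of_nat m + n <= Z.of_nat k)%Z).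
  { intros Hm2 Hn2. apply Hk; auto. repeat split; try lia.
    intros f Hf. apply (flower_FrL L phi m n HL); auto. }
  unfold Pi, qdd in *. lia.
Qed.

Lemma downward_all L phi k A : (forall f, L f <-> K5plus phi f) -> k_bound L k -> sentence A ->
  models_downward phi A (Pi k A) -> models_downward phi A (fun _ _ => True).
Proof.
  intros HL Hk HA Hdown m m' n n' Hm Hm' Hn Hn' Hphi _ Hmm Hnn HmA.
  set (Q := qdd A).
  assert (HQ : 3 <= Q /\ qd A <= Q) by (unfold Q, qdd; lia).
  rewrite (flower_truncate m' n' Q) by (auto; lia).
  rewrite (flower_truncate m n Q) in HmA by (auto; lia).
  apply (Hdown (Nat.min m Q) _ (Z.min n (Z.of_nat Q))); auto; try lia.
  - apply (flower_valid_mono m _ n); auto; lia.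
  - apply (Pi_truncate L phi); auto.
Qed.

Lemma downward_definable L phi A : (forall f, L f <-> K5plus phi f) -> sentence A ->
  models_downward phi A (fun _ _ => True) ->
  (forall G, FrL L G -> fmodels G A <-> forall w, fmodels (generated G w) A) ->
  modally_definable (FrL L) A.
Proof.
  intros HL HA Hdown Hlocal. exists (defining_formula phi A). intros G HG.
  rewrite Hlocal by auto. split.
  - intros H w. apply (defining_formula_at L phi); auto.
  - intros H V w. apply (defining_formula_at L phi); auto.
Qed.

Open Scope Z_scope.

Theorem lemma55 (L : mform -> Prop) (phi : mform) (k : nat) :
  euclidean_logic L ->
  (exists l : list (nat * Z), forall m n, S_L_core L m n -> In (m, n) l) ->
  (forall f, L f <-> K5plus phi f) ->
  k_bound L k ->
  (forall k', k_bound L k' -> (k <= k')%nat) ->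
  forall (A : fo) (x : nat),
    sentence A -> ~ occurs x A ->
    (modally_definable (FrL L) A <->
     (in_Th (FrL L) (FIff A (FAll x (tau x A))) /\
      forall (m m' : nat) (n n' : Z),
        (1 <= m)%nat -> (1 <= m')%nat -> -1 <= n -> -1 <= n' ->
        mvalid (flower m n) phi ->
        Pi k A m n ->
        (m' <= m)%nat -> n' <= n ->
        fmodels (flower m n) A ->
        fmodels (flower m' n') A)).
Proof.
  intros _ _ HL Hk _ A x HA Hx.
  assert (Htau : forall G g, FrL L G ->
            fsat G g (FIff A (FAll x (tau x A))) <->
            (fmodels G A <-> forall w, fmodels (generated G w) A)).
  { intros G g HG. apply (FrL_K5plus L phi G HL) in HG as [_ [HE _]].
    rewrite fsat_iff, fsat_sentence, fsat_all_tau; auto; tauto. }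
  split.
  - intros Hdef. split.
    + intros G HG g. apply Htau, (definable_generated L phi); auto.
    + intros m m' n n' Hm Hm' Hn Hn' Hphi _.
      exact (definable_downward L phi A HL Hdef m m' n n' Hm Hm' Hn Hn' Hphi I).
  - intros [Hth Hdown]. apply (downward_definable L phi); auto.
    + apply (downward_all L phi k); auto.
    + intros G HG. pose proof HG as [[g0] _].
      apply (Htau G (fun _ => g0)), Hth; auto.
Qed.
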